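(* Let $\mathcal{R}$ be a cell space, let $A\subseteq M$, and let $E,E'\subseteq G/G_0$ satisfy $\{g^{-1}\cdot e': e,e'\in E,\ g\in e\}\subseteq E'$. Then for every $m\in M$ we have $m\triangleleft E\subseteq M\setminus A$ or $m\triangleleft E\subseteq A^{+E'}$.
   Context: A cell space $\mathcal{R}$ consists of a group $G$ acting transitively on the left on a nonempty set $M$ via $\triangleright$, a point $m_0\in M$ and a family $(g_{m_0,m})_{m\in M}$ in $G$ with $g_{m_0,m}\triangleright m_0=m$. $G_0$ is the stabiliser of $m_0$, $G/G_0$ the set of left cosets (elements are subsets of $G$), with $G$ acting by $g\cdot hG_0=ghG_0$. The right semi-action $\triangleleft\colon M\times G/G_0\to M$ is $m\triangleleft gG_0=g_{m_0,m}g\triangleright m_0$; $m\triangleleft E=\{m\triangleleft e:e\in E\}$. For $A\subseteq M$, $A^{+E'}=\{m\in M:(m\triangleleft E')\cap A\neq\emptyset\}$. *)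

Record CellSpace := {
  G : Type;
  M : Type;
  mul : G -> G -> G;
  one : G;
  inv : G -> G;
  mulA : forall x y z, mul x (mul y z) = mul (mul x y) z;
  mul1g : forall x, mul one x = x;
  mulg1 : forall x, mul x one = x;
  mulVg : forall x, mul (inv x) x = one;
  mulgV : forall x, mul x (inv x) = one;
  act : G -> M -> M;
  act1 : forall m, act one m = m;
  actM : forall g h m, act (mul g h) m = act g (act h m);
  act_transitive : forall m m', exists g, act g m = m';
  m0 : M;
  gm : M -> G;   (* m |-> g_{m0,m} *)
  gmP : forall m, act (gm m) m0 = m
}.

Section Defs.
Variable R : CellSpace.

Definition G0 : G R -> Prop := fun h => act R h (m0 R) = m0 R.

Definition coset (g : G R) : G R -> Prop :=
  fun x => exists h, G0 h /\ x = mul R g h.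

Definition is_coset (C : G R -> Prop) : Prop := exists g, C = coset g.

Definition cact (g : G R) (C : G R -> Prop) : G R -> Prop :=
  fun x => exists y, C y /\ x = mul R g y.

(** m <| E = { m <| e : e in E }, where m <| gG_0 = g_{m0,m} g |> m0
    (computed via any representative g of the coset e). *)
Definition semiset (m : M R) (E : (G R -> Prop) -> Prop) : M R -> Prop :=
  fun m' => exists e, E e /\ exists g, e g /\ m' = act R (mul R (gm R m) g) (m0 R).

Definition plus (A : M R -> Prop) (E' : (G R -> Prop) -> Prop) : M R -> Prop :=
  fun m => exists m', semiset m E' m' /\ A m'.

End Defs.

(** If some point [m <| e1] of [m <| E] lies in [A], then every point
    [m2 = m <| e2] of [m <| E] sees it through [E']: choosing the
    representative [g] of [e2] with [g_{m0,m2} = g_{m0,m} g], one gets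
    [m <| e1 = m2 <| (g^-1 . e1)], and [g^-1 . e1] belongs to [E'].
    Otherwise [m <| E] avoids [A]. *)

From Stdlib Require Import Classical.

Section CellSpaceFacts.
Variable R : CellSpace.

Local Infix "*" := (mul R).

Lemma mulKVg (x y : G R) : x * (inv R x * y) = y.
Proof. now rewrite mulA, mulgV, mul1g. Qed.

Lemma mulgKVg (x g y : G R) : (x * g) * (inv R g * y) = x * y.
Proof. now rewrite <- mulA, mulKVg. Qed.

Lemma G0_mul (h k : G R) : G0 R h -> G0 R k -> G0 R (h * k).
Proof. unfold G0; intros Hh Hk; now rewrite actM, Hk. Qed.

Lemma coset_mulr (e : G R -> Prop) (g h : G R) :
  is_coset R e -> e g -> G0 R h -> e (g * h).
Proof.
  intros [c ->] [k [Hk ->]] Hh.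
  exists (k * h); split; [exact (G0_mul _ _ Hk Hh) | now rewrite mulA].
Qed.

Lemma G0_inv_mul_gm (g : G R) (m : M R) :
  act R g (m0 R) = m -> G0 R (inv R g * gm R m).
Proof.
  intros Hm; unfold G0.
  now rewrite actM, gmP, <- Hm, <- actM, mulVg, act1.
Qed.

Lemma gm_semiset_point (m : M R) (e : G R -> Prop) (g : G R) :
  is_coset R e -> e g ->
  exists g', e g' /\ gm R (act R (gm R m * g) (m0 R)) = gm R m * g'.
Proof.
  intros He Hg.
  set (m' := act R (gm R m * g) (m0 R)).
  set (h := inv R (gm R m * g) * gm R m').
  exists (g * h); split.
  - exact (coset_mulr _ _ _ He Hg (G0_inv_mul_gm _ _ eq_refl)).
  - now rewrite mulA; unfold h; rewrite mulKVg.
Qed.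

Lemma semiset_plus (A : M R -> Prop) (E E' : (G R -> Prop) -> Prop) (m m1 m2 : M R) :
  (forall e, E e -> is_coset R e) ->
  (forall e e' g, E e -> E e' -> e g -> E' (cact R (inv R g) e')) ->
  semiset R m E m1 -> A m1 -> semiset R m E m2 -> plus R A E' m2.
Proof.
  intros HE Hsub [e1 [He1 [g1 [Hg1 ->]]]] HA [e2 [He2 [g2 [Hg2 ->]]]].
  destruct (gm_semiset_point m _ _ (HE e2 He2) Hg2) as [g [Hg Hgm]].
  exists (act R (gm R m * g1) (m0 R)); split; [| exact HA].
  exists (cact R (inv R g) e1); split; [exact (Hsub e2 e1 g He2 He1 Hg) |].
  exists (inv R g * g1); split; [now exists g1 |].
  now rewrite Hgm, mulgKVg.
Qed.

End CellSpaceFacts.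

Theorem lemmaX (R : CellSpace) (A : M R -> Prop)
    (E E' : (G R -> Prop) -> Prop)
    (HE : forall e, E e -> is_coset R e)
    (HE' : forall e, E' e -> is_coset R e)
    (Hsub : forall e e' g, E e -> E e' -> e g -> E' (cact R (inv R g) e')) :
  forall m : M R,
    (forall m', semiset R m E m' -> ~ A m') \/
    (forall m', semiset R m E m' -> plus R A E' m').
Proof.
  intros m.
  destruct (classic (exists m1, semiset R m E m1 /\ A m1)) as [[m1 [Hm1 HA]] | Hnone].
  - right; intros m2; exact (semiset_plus R A E E' m m1 m2 HE Hsub Hm1 HA).
  - left; intros m' Hm' HA; exact (Hnone (ex_intro _ m' (conj Hm' HA))).
Qed.
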